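(* Let $\mathbf{K}=\omega$ be a countable set with no structure (so $G=\mathrm{Aut}(\mathbf{K})=S_\infty$), with exhaustion $\mathbf{A}_m=\{0,\dots,m-1\}$, and $H_m$ the set of injections $\mathbf{A}_m\to\omega$. Then for every $m\geq2$, the set $B'_m$ is meager in $2^{H_m}$. In particular, every $T\subseteq H_m$ with $\overline{\chi_T\cdot G}=2^{H_m}$ (these form a dense $G_\delta$ subset of $2^{H_m}$) is not in $B'_m$.
   Context: Identify subsets of $H_n$ with $2^{H_n}$ (product topology), with right $G$-action $(\chi\cdot g)(f)=\chi(g\circ f)$. A set $S\subseteq H_n$ is minimal if $\overline{\chi_S\cdot G}$ is a minimal $G$-flow (every orbit dense). $B_n$ is the Boolean algebra of subsets of $H_n$ generated by the minimal subsets of $H_n$. For $m\leq n$ and $T\subseteq H_m$, $i^n_m(T)=\{s\in H_n: s|_{\mathbf{A}_m}\in T\}$, and $B'_m=\{T\subseteq H_m:\exists n\geq m\ (i^n_m(T)\in B_n)\}$. *)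

From HB Require Import structures.
From mathcomp Require Import all_boot all_order all_algebra.
From mathcomp Require Import all_classical all_reals all_analysis.
Set Implicit Arguments. Unset Strict Implicit. Unset Printing Implicit Defensive.
Local Open Scope classical_set_scope.

(** K = omega with no structure; A_n = {0,...,n-1} = 'I_n. *)

Definition H (n : nat) := {f : 'I_n -> nat | injective f}.

Definition Sinf := {g : nat -> nat | bijective g}.

(** 2^{H_n} with the product topology (pointwise convergence);
    a subset S of H_n is identified with its characteristic function. *)
Definition Cantor (n : nat) := {ptws H n -> bool}.

Lemma comp_inj n (g : Sinf) (f : H n) : injective (proj1_sig g \o proj1_sig f).
Proof.
move=> i j /= e; apply: (proj2_sig f).
by apply: (bij_inj (proj2_sig g)).
Qed.

Definition compH n (g : Sinf) (f : H n) : H n :=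
  @exist _ (fun h : 'I_n -> nat => injective h) (proj1_sig g \o proj1_sig f) (@comp_inj n g f).

Definition act n (chi : Cantor n) (g : Sinf) : Cantor n :=
  (fun f : H n => chi (compH g f)) : Cantor n.

Definition Gorbit n (chi : Cantor n) : set (Cantor n) := range (act chi).

(** S is minimal: the Gorbit closure of chi_S is a minimal G-flow,
    i.e. every Gorbit in it is dense in it. *)
Definition minimal_set n (chi : Cantor n) : Prop :=
  forall y, closure (Gorbit chi) y -> closure (Gorbit y) = closure (Gorbit chi).

Inductive bool_alg_gen (X : Type) (P : set (X -> bool)) : (X -> bool) -> Prop :=
| BA_gen S : P S -> bool_alg_gen P S
| BA_empty : bool_alg_gen P (fun _ => false)
| BA_compl S : bool_alg_gen P S -> bool_alg_gen P (fun x => ~~ S x)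
| BA_union S T : bool_alg_gen P S -> bool_alg_gen P T ->
    bool_alg_gen P (fun x => S x || T x).

Definition B (n : nat) : set (Cantor n) :=
  [set chi | bool_alg_gen (minimal_set (n := n)) chi].
Arguments B : clear implicits.

Lemma restr_inj m n (le : (m <= n)%N) (s : H n) :
  injective (proj1_sig s \o widen_ord le).
Proof.
move=> i j /= /(proj2_sig s) /(congr1 val) /= e; exact: val_inj.
Qed.

Definition restr m n (le : (m <= n)%N) (s : H n) : H m :=
  @exist _ (fun h : 'I_m -> nat => injective h) (proj1_sig s \o widen_ord le) (@restr_inj m n le s).

Definition iext m n (le : (m <= n)%N) (T : Cantor m) : Cantor n :=
  (fun s : H n => T (restr le s)) : Cantor n.

Definition B' (m : nat) : set (Cantor m) :=
  [set T | exists n (le : (m <= n)%N), B n (iext le T)].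

Arguments B' : clear implicits.

Definition nowhere_dense (X : topologicalType) (A : set X) : Prop :=
  interior (closure A) = set0.

Definition meager (X : topologicalType) (A : set X) : Prop :=
  exists F : nat -> set X,
    (forall k, nowhere_dense (F k)) /\ A `<=` \bigcup_k F k.

From HB Require Import structures.
From mathcomp Require Import all_boot all_order all_algebra.
From mathcomp Require Import all_classical all_reals all_analysis.
From mathcomp Require Import zify.

(* By the ordered Ramsey theorem, the orbit closure of any S contains a point S o a
   (a an injection of omega, hence a limit of bijections) whose value on a tuple s only
   depends on the order pattern of s.  If S is minimal, S is in turn in the orbit
   closure of S o a, so on every finite window of omega S is one fixed boolean
   combination of the order patterns of its tuples under a preorder of the window;
   boolean combinations of such sets need k preorders.  Such a set can encode, along two
   coordinates and on a window of 3N+1 points, at most (3N+1)^((3N+1)k) bipartite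
   graphs on N + N vertices, fewer than all 2^(N^2) of them for N large.  Failing to
   encode a given graph is a closed condition with dense complement (write the graph
   far out), so B'_m is meager, while a set with dense orbit encodes every graph. *)

Set Implicit Arguments. Unset Strict Implicit. Unset Printing Implicit Defensive.
Local Open Scope classical_set_scope.
Local Open Scope nat_scope.

Local Notation bigraph N := {ffun 'I_N * 'I_N -> bool}.

(** * Order patterns and the ordered Ramsey theorem *)

Lemma homo_ltn_mono (a : nat -> nat) :
  {homo a : i j / i < j} -> {mono a : i j / i < j}.
Proof. by move/leq_mono/leqW_mono. Qed.

Lemma infinite_pigeonhole (C : finType) (u : nat -> C) :
  exists v (b : nat -> nat), {homo b : i j / i < j} /\ forall k, u (b k) = v.
Proof.
have [v [A Ainf uA]] := finite_range_cst_subsequence (finite_finset (X := range u)).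
have [|b [b_mono _ Ab]] := infinite_increasing_seq_wf (T := nat) _ Ainf 0.
  by move=> n; apply: sub_finite_set (finite_II n.+1) => m /=.
by exists v, b; split=> [i j|k]; [rewrite -(leqW_mono b_mono) | apply/uA].
Qed.

Definition pattern n (t : 'I_n -> nat) : {ffun 'I_n * 'I_n -> bool} :=
  [ffun ij => t ij.1 < t ij.2].

Lemma eq_pattern n (f g : 'I_n -> nat) :
  (forall i j, (f i < f j) = (g i < g j)) -> pattern f = pattern g.
Proof. by move=> fg; apply/ffunP => -[i j]; rewrite !ffunE fg. Qed.

Lemma pattern_ltE n (f g : 'I_n -> nat) :
  pattern f = pattern g -> forall i j, (f i < f j) = (g i < g j).
Proof. by move/ffunP=> fg i j; have := fg (i, j); rewrite !ffunE. Qed.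

Lemma pattern_inj n (f g : 'I_n -> nat) :
  pattern f = pattern g -> injective f -> injective g.
Proof.
move=> fg f_inj i j gij; apply: f_inj.
have [lt|gt|//] := ltngtP (f i) (f j).
- by move: lt; rewrite (pattern_ltE fg) gij ltnn.
- by move: gt; rewrite (pattern_ltE fg) gij ltnn.
Qed.

Definition pattern_witness n (P : {ffun 'I_n * 'I_n -> bool}) : 'I_n -> nat :=
  if pselect (exists t : 'I_n -> nat, injective t /\ pattern t = P) is left ex
  then sval (cid ex) else fun=> 0.

Lemma pattern_witnessP n (t : 'I_n -> nat) : injective t ->
  pattern (pattern_witness (pattern t)) = pattern t.
Proof.
move=> t_inj; rewrite /pattern_witness; case: pselect => [ex|[]]; last by exists t.
by case: (cid ex) => ? [].
Qed.

Definition argmin_pos n (f : 'I_n.+1 -> nat) := [arg min_(j < ord0) f j].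

Lemma argmin_posP n (f : 'I_n.+1 -> nat) k : f (argmin_pos f) <= f k.
Proof. by rewrite /argmin_pos; case: arg_minnP => // i _; apply. Qed.

Lemma argmin_pos_lift n (f : 'I_n.+1 -> nat) k : injective f ->
  f (argmin_pos f) < f (lift (argmin_pos f) k).
Proof.
move=> f_inj; rewrite ltn_neqAle argmin_posP andbT.
by apply/eqP => /f_inj /eqP; rewrite (negbTE (neq_lift _ _)).
Qed.

Lemma argmin_pos_pattern n (f g : 'I_n.+1 -> nat) :
  injective f -> pattern f = pattern g -> argmin_pos f = argmin_pos g.
Proof.
move=> f_inj fg; apply/eqP; apply: contraT => ne.
have := argmin_posP g (argmin_pos f); rewrite leqNgt -(pattern_ltE fg).
by rewrite ltn_neqAle argmin_posP andbT (inj_eq f_inj) ne.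
Qed.

Definition insert_at n (j : 'I_n.+1) (x : nat) (t : 'I_n -> nat) : 'I_n.+1 -> nat :=
  fun k => if unlift j k is Some k' then t k' else x.

Definition order_canonical n (C : Type) (c : ('I_n -> nat) -> C) (a : nat -> nat) :=
  forall f g, injective f -> pattern f = pattern g -> c (a \o f) = c (a \o g).

Section OrderedRamseyStep.

Variables (n : nat) (C : finType) (c : ('I_n.+1 -> nat) -> C).
Hypothesis IH : forall (C' : finType) (c' : ('I_n -> nat) -> C'),
  exists a, {homo a : i j / i < j} /\ order_canonical c' a.

Let tail_coloring (s : nat -> nat) (t : 'I_n -> nat) : {ffun 'I_n.+1 -> C} :=
  [ffun j => c (insert_at j (s 0) (s \o succn \o t))].

Let thin s := sval (cid (IH (tail_coloring s))).

Let thinP s :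
  {homo thin s : i j / i < j} /\ order_canonical (tail_coloring s) (thin s) :=
  svalP (cid (IH (tail_coloring s))).

(* [nested i.+1] enumerates a subsequence of the tail of [nested i] on which the color
   of a tuple whose minimum is [nested i 0] depends only on the position of that
   minimum and on the pattern of the other entries. *)
Let step (s : nat -> nat) := s \o succn \o thin s.
Let nested i := iter i step id.
Let diag i := nested i 0.

Let tail_color i : {ffun 'I_n.+1 * {ffun 'I_n * 'I_n -> bool} -> C} :=
  [ffun jP => tail_coloring (nested i) (thin (nested i) \o pattern_witness jP.2) jP.1].

Lemma nested_homo i : {homo nested i : u v / u < v}.
Proof. by elim: i => [//|i IHi] u v uv /=; apply/IHi/(thinP _).1. Qed.

Lemma nested_tail i d u : exists w, nested (i + d) u = nested i w.
Proof.
elim: d u => [|d IHd] u; first by exists u; rewrite addn0.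
by rewrite addnS; apply: IHd.
Qed.

Lemma diag_homo : {homo diag : i j / i < j}.
Proof.
apply: (@homo_ltn nat diag (fun x y => x < y)) => [? ? ?|k]; first exact: ltn_trans.
exact: nested_homo.
Qed.

Lemma diag_tail i j : i < j -> exists w, diag j = nested i.+1 w.
Proof. by move=> ij; rewrite -(subnKC ij); apply: nested_tail. Qed.

Lemma color_diag (b : nat -> nat) (f : 'I_n.+1 -> nat) :
  {homo b : i j / i < j} -> injective f ->
  c (diag \o b \o f) =
    tail_color (b (f (argmin_pos f))) (argmin_pos f, pattern (f \o lift (argmin_pos f))).
Proof.
move=> b_homo f_inj; set j := argmin_pos f; set i := b (f j).
have /choice [t diag_t] : forall k, exists w, diag (b (f (lift j k))) = nested i.+1 w.
  by move=> k; apply: diag_tail; rewrite /i; apply: b_homo; exact: argmin_pos_lift.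
have -> : diag \o b \o f = insert_at j (nested i 0) (nested i.+1 \o t).
  apply: funext => k; rewrite /insert_at; case: unliftP => [k' ->|->] /=; last by [].
  exact: diag_t.
have t_pat : pattern t = pattern (f \o lift j).
  apply: eq_pattern => u w; rewrite -(homo_ltn_mono (nested_homo i.+1)) -!diag_t.
  by rewrite (homo_ltn_mono diag_homo) (homo_ltn_mono b_homo).
have t_inj : injective t := pattern_inj (esym t_pat) (inj_comp f_inj (@lift_inj _ j)).
rewrite /tail_color ffunE /= -t_pat.
by rewrite -((thinP (nested i)).2 _ _ t_inj (esym (pattern_witnessP t_inj))) ffunE.
Qed.

Lemma ordered_ramsey_step :
  exists a, {homo a : i j / i < j} /\ order_canonical c a.
Proof.
have [v [b [b_homo color_b]]] := infinite_pigeonhole tail_color.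
exists (diag \o b); split=> [i j ij|f g f_inj fg]; first exact/diag_homo/b_homo.
have g_inj := pattern_inj fg f_inj.
rewrite (color_diag b_homo f_inj) (color_diag b_homo g_inj) !color_b.
rewrite -(argmin_pos_pattern f_inj fg); congr (v (_, _)).
by apply: eq_pattern => u w; rewrite /= (pattern_ltE fg).
Qed.

End OrderedRamseyStep.

Theorem ordered_ramsey n (C : finType) (c : ('I_n -> nat) -> C) :
  exists a, {homo a : i j / i < j} /\ order_canonical c a.
Proof.
elim: n C c => [|n IH] C c; last exact: ordered_ramsey_step.
by exists id; split=> // f g _ _; congr c; apply/funext => -[].
Qed.

(** * The space 2^{H_n} *)

Lemma eq_H n (s t : H n) : sval s = sval t -> s = t.
Proof. by case: s t => [f fP] [g gP] /=; apply: eq_exist. Qed.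

Lemma Gorbit_refl n (S : Cantor n) : Gorbit S S.
Proof.
have id_bij : bijective (@id nat) by exists id.
by exists (exist _ id id_bij) => //; apply: funext => s; congr S; apply: eq_H.
Qed.

HB.instance Definition _ n := gen_eqMixin (H n).

Lemma nbhs_coord n (S : Cantor n) (p : H n) :
  nbhs S [set z : Cantor n | z p = S p].
Proof.
have S_p : nbhs (S p) [set b : bool | b = S p] by apply/principal_filterP.
exact: (@proj_continuous (H n) (fun=> bool) p S _ S_p).
Qed.

Definition cylinder n N (e : 'I_N -> nat) (S : Cantor n) : set (Cantor n) :=
  [set z | forall (h : 'I_n -> 'I_N) (pf : injective (e \o h)),
     z (exist _ (e \o h) pf) = S (exist _ (e \o h) pf)].

Lemma nbhs_cylinder n N (e : 'I_N -> nat) (S : Cantor n) : nbhs S (cylinder e S).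
Proof.
have : \forall z \near S, forall (h : {ffun 'I_n -> 'I_N}) (pf : injective (e \o h)),
    z (exist _ (e \o h) pf) = S (exist _ (e \o h) pf).
  apply: (filter_forall (nbhs_filter S)) => h.
  have [pf0|npf] := pselect (injective (e \o h)); last by apply: nearW => z pf.
  apply: filterS (nbhs_coord S (exist _ (e \o h) pf0)) => z /= zS pf.
  by rewrite (Prop_irrelevance pf pf0).
apply: filterS => z zS h pf.
have ehE : e \o h = e \o [ffun x => h x] by apply: funext => x /=; rewrite ffunE.
have pf' : injective (e \o [ffun x => h x]) by rewrite -ehE.
by rewrite (_ : exist _ _ pf = exist _ _ pf') ?zS //; apply: eq_H.
Qed.

Lemma cvg_coordwise n (F : set_system (Cantor n)) (y : Cantor n) : Filter F ->
  (forall p, \forall z \near F, z p = y p) -> F --> y.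
Proof.
move=> FF Fy.
have [_ +] := @cvg_sup _ _
  (fun p => Topological.class (initial_topology (fun f : H n -> bool => f p))) F y FF.
apply=> p A; rewrite nbhsE => -[C [[B _ CB] Cy] CA].
rewrite nbhs_filterE; apply: filterS (Fy p) => z zy; apply: CA.
by rewrite -CB /= zy; rewrite -CB in Cy.
Qed.

Lemma closure_coordwise_limit n (A : set (Cantor n)) (u : nat -> Cantor n)
    (y : Cantor n) :
  (forall k, A (u k)) -> (forall p, \forall k \near \oo, u k p = y p) -> closure A y.
Proof.
move=> Au uy B /(@cvg_coordwise n (u @ \oo) y _ uy) [K _ uB].
by exists (u K); split; [exact: Au | apply: uB => /=].
Qed.

(** * Minimal sets are order-determined *)

Definition swap (u v w : nat) : nat := if w == u then v else if w == v then u else w.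

Lemma swapK u v : involutive (swap u v).
Proof.
move=> w; rewrite /swap.
have [->|wu] := eqVneq w u; first by rewrite eqxx; case: eqVneq.
have [->|wv] := eqVneq w v; first by rewrite eqxx.
by rewrite (negbTE wu) (negbTE wv).
Qed.

Fixpoint bij_prefix (a : nat -> nat) (k : nat) : nat -> nat :=
  if k is k'.+1 then swap (bij_prefix a k' k') (a k') \o bij_prefix a k' else id.

Lemma bij_prefix_bij a k : bijective (bij_prefix a k).
Proof.
elim: k => [|k IHk] /=; first by exists id.
by apply: bij_comp => //; apply: (Bijective (swapK _ _) (swapK _ _)).
Qed.

Lemma bij_prefixE a k i : injective a -> i < k -> bij_prefix a k i = a i.
Proof.
move=> a_inj; elim: k => [//|k IHk] /=; rewrite ltnS leq_eqVlt => /orP[/eqP ->|ik].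
  by rewrite /swap eqxx.
rewrite /swap -IHk // (inj_eq (bij_inj (bij_prefix_bij a k))) IHk //.
by rewrite (inj_eq a_inj) !ifN // neq_ltn ik.
Qed.

Definition precomp n (a : nat -> nat) (a_inj : injective a) (S : Cantor n) : Cantor n :=
  fun s => S (exist _ (a \o sval s) (inj_comp a_inj (svalP s))).

Lemma closure_orbit_precomp n (S : Cantor n) a (a_inj : injective a) :
  closure (Gorbit S) (precomp a_inj S).
Proof.
apply: (@closure_coordwise_limit _ _ (fun k => act S (exist _ _ (bij_prefix_bij a k)))).
  by move=> k; exists (exist _ _ (bij_prefix_bij a k)).
move=> s; exists (\max_(i < n) sval s i).+1 => // k /= s_k.
congr S; apply: eq_H; apply: funext => i /=; apply: bij_prefixE => //.
by apply: leq_trans s_k; rewrite ltnS (@leq_bigmax _ (fun i => sval s i)).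
Qed.

Definition order_determined n (X : Cantor n) : Prop :=
  exists k (Phi : ('I_k -> 'I_n -> 'I_n -> bool) -> bool),
  forall N (e : 'I_N -> nat), injective e ->
  exists r : 'I_k -> 'I_N -> 'I_N,
  forall (h : 'I_n -> 'I_N) (pf : injective (e \o h)),
    X (exist _ (e \o h) pf) = Phi (fun i a b => r i (h a) < r i (h b)).

Lemma order_determined0 n : order_determined (fun _ : H n => false).
Proof. by exists 0, (fun=> false) => N e _; exists (fun=> id). Qed.

Lemma order_determinedC n (X : Cantor n) :
  order_determined X -> order_determined (fun s => ~~ X s).
Proof.
case=> k [Phi X_Phi]; exists k, (fun R => ~~ Phi R) => N e e_inj.
by have [r r_Phi] := X_Phi N e e_inj; exists r => h pf; rewrite r_Phi.
Qed.

Lemma order_determinedU n (X Y : Cantor n) :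
  order_determined X -> order_determined Y -> order_determined (fun s => X s || Y s).
Proof.
case=> k1 [Phi1 X_Phi] [k2 [Phi2 Y_Phi]].
exists (k1 + k2), (fun R => Phi1 (R \o lshift k2) || Phi2 (R \o @rshift k1 k2)).
move=> N e e_inj.
have [r1 r1_Phi] := X_Phi N e e_inj; have [r2 r2_Phi] := Y_Phi N e e_inj.
exists (fun i => match fintype.split i with inl i1 => r1 i1 | inr i2 => r2 i2 end).
move=> h pf.
by rewrite r1_Phi r2_Phi /=; congr (Phi1 _ || Phi2 _); apply: funext => i /=;
  rewrite ?(unsplitK (inl i)) ?(unsplitK (inr i)).
Qed.

Lemma order_rank_subproof N (v : 'I_N -> nat) (b : 'I_N) :
  #|[set c | v c < v b]%SET| < N.
Proof.
rewrite -[N in _ < N]card_ord -cardsT; apply/proper_card; rewrite properT.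
by apply/eqP => /setP/(_ b); rewrite !inE ltnn.
Qed.

Definition order_rank N (v : 'I_N -> nat) (b : 'I_N) : 'I_N :=
  Ordinal (order_rank_subproof v b).

Lemma order_rank_lt N (v : 'I_N -> nat) b c :
  v b < v c -> order_rank v b < order_rank v c.
Proof.
move=> bc; apply: proper_card; apply/properP; split.
  by apply/fintype.subsetP => x; rewrite !inE => /ltn_trans; apply.
by exists b; rewrite !inE ?ltnn.
Qed.

Lemma order_rank_ltE N (v : 'I_N -> nat) b c : injective v ->
  (order_rank v b < order_rank v c) = (v b < v c).
Proof.
move=> v_inj; have [bc|cb|/v_inj ->] := ltngtP (v b) (v c); last by rewrite ltnn.
- exact: order_rank_lt.
- by apply/negbTE; rewrite -leqNgt ltnW // order_rank_lt.
Qed.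

Lemma closure_orbit_order_determined n (y S : Cantor n)
    (Psi : {ffun 'I_n * 'I_n -> bool} -> bool) :
  (forall s, y s = Psi (pattern (sval s))) -> closure (Gorbit y) S ->
  order_determined S.
Proof.
move=> yE Sy; exists 1, (fun R => Psi [ffun ij => R ord0 ij.1 ij.2]) => N e e_inj.
have [_ [[g _ <-] gS]] := Sy _ (nbhs_cylinder e S).
have v_inj : injective (sval g \o e) := inj_comp (bij_inj (svalP g)) e_inj.
exists (fun=> order_rank (sval g \o e)) => h pf.
rewrite -gS /act yE; congr Psi; apply/ffunP => ij.
by rewrite !ffunE order_rank_ltE.
Qed.

Definition total_coloring n (S : Cantor n) (f : 'I_n -> nat) : bool :=
  if pselect (injective f) is left pf then S (exist _ f pf) else false.

Lemma total_coloringE n (S : Cantor n) f (pf : injective f) :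
  total_coloring S f = S (exist _ f pf).
Proof. by rewrite /total_coloring; case: pselect => // pf'; congr S; apply: eq_H. Qed.

Lemma ramsey_precomp n (S : Cantor n) :
  exists a (a_inj : injective a) (Psi : {ffun 'I_n * 'I_n -> bool} -> bool),
  forall s, precomp a_inj S s = Psi (pattern (sval s)).
Proof.
have [a [a_homo a_can]] := ordered_ramsey (total_coloring S).
have a_inj : injective a := incn_inj (leq_mono a_homo).
exists a, a_inj, (fun P => total_coloring S (a \o pattern_witness P)) => s.
rewrite -(a_can _ _ (svalP s) (esym (pattern_witnessP (svalP s)))).
by rewrite (total_coloringE _ (inj_comp a_inj (svalP s))).
Qed.

Lemma minimal_order_determined n (S : Cantor n) :
  minimal_set S -> order_determined S.
Proof.
move=> S_min; have [a [a_inj [Psi yE]]] := ramsey_precomp S.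
apply: (closure_orbit_order_determined yE).
rewrite (S_min _ (@closure_orbit_precomp _ S _ a_inj)).
exact/subset_closure/Gorbit_refl.
Qed.

Lemma bool_alg_order_determined n (X : Cantor n) :
  bool_alg_gen (@minimal_set n) X -> order_determined X.
Proof.
elim=> [S /minimal_order_determined //||S _|S T _ IHS _ IHT].
- exact: order_determined0.
- exact: order_determinedC.
- exact: order_determinedU.
Qed.

(** * Encoding bipartite graphs *)

Lemma leq_sqr_exp2 j : 4 <= j -> j * j <= 2 ^ j.
Proof.
elim: j => // j IHj; rewrite leq_eqVlt => /orP[/eqP <-//|j4].
by have := IHj j4; rewrite expnS; nia.
Qed.

(* There are fewer [k]-tuples of self-maps of a window with 3N+1 points than
   bipartite graphs on N + N vertices. *)
Lemma large_window n k :
  exists N, n <= N /\ ((N + N + N).+1 ^ (N + N + N).+1) ^ k < 2 ^ (N * N).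
Proof.
pose j := n + 4 * k + 8; exists (2 ^ j).
have j_sqr : j * j <= 2 ^ j by apply: leq_sqr_exp2; lia.
have j_lt : j < 2 ^ j by apply: ltn_expl.
set X := 2 ^ j in j_sqr j_lt *; set M := (X + X + X).+1.
have M_le : M <= 2 ^ j.+2 by rewrite !expnS -/X /M; lia.
split; first lia.
rewrite -expnM; apply: (@leq_ltn_trans ((2 ^ j.+2) ^ (M * k))).
  by case: (M * k) => // e; rewrite leq_exp2r.
rewrite -expnM ltn_exp2l //.
have : j.+2 * 4 * k < X by rewrite /j in j_sqr *; nia.
nia.
Qed.

Section GraphCoding.

Variables (m : nat) (i0 i1 : 'I_m).

(* [T] encodes [G] if on some window [e] of omega, a tuple [h] is in [T] exactly when
   coordinates [i0] and [i1] of [h] are an edge of [G], with left vertices [0 .. N-1]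
   and right vertices [N .. 2N-1]; the points [2N .. 3N] leave room for the other
   coordinates of a tuple (see [edge_tuple]). *)
Definition window N := 'I_(N + N + N).+1.

Definition edge_pred N (G : bigraph N) (h : 'I_m -> window N) :=
  [exists q : 'I_N * 'I_N, [&& h i0 == q.1 :> nat, h i1 == N + q.2 :> nat & G q]].

Definition encodes (T : Cantor m) N (G : bigraph N) : Prop :=
  exists e : window N -> nat, injective e /\
    forall (h : 'I_m -> window N) (pf : injective (e \o h)),
      T (exist _ (e \o h) pf) = edge_pred G h.

Lemma encodes_act (T : Cantor m) g N (G : bigraph N) :
  encodes (act T g) G -> encodes T G.
Proof.
case=> e [e_inj eG]; exists (sval g \o e); split=> [|h pf].
  exact: inj_comp (bij_inj (svalP g)) e_inj.
have pf' : injective (e \o h) by move=> x y /(congr1 (sval g)) /pf.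
by rewrite -(eG h pf'); congr T; apply: eq_H.
Qed.

Lemma nbhs_encodes (T : Cantor m) N (G : bigraph N) :
  encodes T G -> nbhs T [set Z | encodes Z G].
Proof.
case=> e [e_inj eG]; apply: filterS (nbhs_cylinder e T) => Z ZT.
by exists e; split=> // h pf; rewrite ZT eG.
Qed.

Lemma encodes_closure_orbit (T Z : Cantor m) N (G : bigraph N) :
  closure (Gorbit T) Z -> encodes Z G -> encodes T G.
Proof. by move=> TZ /nbhs_encodes /TZ [_ [[g _ <-]]]; apply: encodes_act. Qed.

Definition plant N (G : bigraph N) (T : Cantor m) (k : nat) : Cantor m :=
  fun s => if [forall i, k <= sval s i < k + (N + N + N).+1]
           then edge_pred G (fun i => inord (sval s i - k)) else T s.

Lemma plant_encodes N (G : bigraph N) T k : encodes (plant G T k) G.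
Proof.
exists (fun x : window N => k + x); split=> [x y /addnI /ord_inj //|h pf].
rewrite /plant /= ifT; last first.
  by apply/forallP => i; rewrite leq_addr ltn_add2l ltn_ord.
by congr edge_pred; apply: funext => i; rewrite addKn inord_val.
Qed.

Lemma plant_cvg N (G : bigraph N) T : plant (N := N) G T k @[k --> \oo] --> T.
Proof.
apply: cvg_coordwise => s; exists (\max_(i < m) sval s i).+1 => // k /= s_k.
rewrite /plant ifF //; apply/forallP => /(_ i0) /andP[k_le _].
have := leq_trans k_le (@leq_bigmax _ (fun i => sval s i) i0).
by rewrite leqNgt (leq_trans _ s_k).
Qed.

Lemma nowhere_dense_not_encodes N (G : bigraph N) :
  nowhere_dense [set T | ~ encodes T G].
Proof.
set F := [set T | ~ encodes T G].
have F_closed : closure F `<=` F by move=> T FT /nbhs_encodes /FT [Z []].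
apply/seteqP; split=> // T /(@plant_cvg N G T) [K _ /(_ K (leqnn K)) /F_closed].
by apply; apply: plant_encodes.
Qed.

Hypothesis i01 : i0 != i1.

Definition edge_tuple n N (q : 'I_N * 'I_N) (i : 'I_n) : window N :=
  inord (if i == i0 :> nat then q.1 : nat
         else if i == i1 :> nat then N + q.2 else N + N + i).

Lemma edge_tupleE n N (q : 'I_N * 'I_N) (i : 'I_n) : n <= N ->
  edge_tuple q i = (if i == i0 :> nat then q.1 : nat
                    else if i == i1 :> nat then N + q.2 else N + N + i) :> nat.
Proof.
move=> nN; rewrite inordK //.
move: (ltn_ord i) (ltn_ord q.1) (ltn_ord q.2).
by case: (i =P i0 :> nat); case: (i =P i1 :> nat); lia.
Qed.

Lemma edge_tuple_inj n N (q : 'I_N * 'I_N) : n <= N -> injective (@edge_tuple n N q).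
Proof.
move=> nN i j /(congr1 val); rewrite /= !edge_tupleE // => e; apply: ord_inj.
have i01' : (i0 : nat) <> i1 by move/ord_inj/eqP; apply/negP.
move: e (ltn_ord i) (ltn_ord j) (ltn_ord q.1) (ltn_ord q.2).
by case: (i =P i0 :> nat); case: (j =P i0 :> nat); case: (i =P i1 :> nat);
  case: (j =P i1 :> nat); lia.
Qed.

Lemma edge_pred_edge_tuple n (le : m <= n) N (G : bigraph N) q : n <= N ->
  edge_pred G (edge_tuple q \o widen_ord le) = G q.
Proof.
move=> nN; have i10 : (i1 == i0 :> nat) = false by rewrite eq_sym; apply/negbTE.
rewrite /edge_pred /= !edge_tupleE //= eqxx i10 eqxx.
apply/existsP/idP => [[[a b] /and3P[/= /eqP/ord_inj <- /eqP/addnI/ord_inj <-]]|Gq].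
  by case: q.
by exists q; rewrite !eqxx.
Qed.

Lemma encoded_graph_from_orders n (le : m <= n) (T : Cantor m) N (G : bigraph N)
    (e : window N -> nat) k (Phi : ('I_k -> 'I_n -> 'I_n -> bool) -> bool)
    (r : 'I_k -> window N -> window N) :
  n <= N -> injective e ->
  (forall h pf, T (exist _ (e \o h) pf) = edge_pred G h) ->
  (forall (h : 'I_n -> window N) pf,
     iext le T (exist _ (e \o h) pf) = Phi (fun i a b => r i (h a) < r i (h b))) ->
  forall q, G q = Phi (fun i a b => r i (edge_tuple q a) < r i (edge_tuple q b)).
Proof.
move=> nN e_inj eG e_Phi q.
have pf : injective (e \o edge_tuple q) := inj_comp e_inj (edge_tuple_inj (q := q) nN).
rewrite -(e_Phi _ pf) -(@edge_pred_edge_tuple _ le _ G q nN).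
exact: esym (eG (edge_tuple q \o widen_ord le) (@restr_inj _ _ le (exist _ _ pf))).
Qed.

Lemma order_determined_not_encodes n (le : m <= n) (T : Cantor m) :
  order_determined (iext le T) -> exists N (G : bigraph N), ~ encodes T G.
Proof.
case=> k [Phi T_Phi]; have [N [nN card_lt]] := large_window n k.
exists N; apply: contrapT => all_enc.
have {}all_enc (G : bigraph N) : encodes T G.
  by apply: contrapT => G_enc; apply: all_enc; exists G.
have [e e_enc] := choice all_enc.
have [r r_Phi] := choice (fun G => T_Phi _ (e G) (e_enc G).1).
have G_code (G : bigraph N) q :
    G q = Phi (fun i a b => r G i (edge_tuple q a) < r G i (edge_tuple q b)).
  exact: (@encoded_graph_from_orders n le T N G (e G) k Phi (r G) nN
           (e_enc G).1 (e_enc G).2 (r_Phi G) q).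
pose code G : {ffun 'I_k -> {ffun window N -> window N}} :=
  [ffun i => [ffun x => r G i x]].
have code_inj : injective code.
  move=> G G' GG'; apply/ffunP => q.
  rewrite (G_code G) (G_code G').
  congr Phi; apply/funext => i; apply/funext => a; apply/funext => b.
  have := congr1 (fun c : {ffun _ -> {ffun _ -> _}} =>
    (c i (edge_tuple q a), c i (edge_tuple q b))) GG'.
  by rewrite !ffunE => -[-> ->].
have := leq_card code code_inj; rewrite !card_ffun card_prod card_bool !card_ord.
by rewrite leqNgt card_lt.
Qed.

End GraphCoding.

Lemma meager_countable_cover (X : topologicalType) (I : countType)
    (A : I -> set X) (B : set X) :
  (forall i, nowhere_dense (A i)) -> B `<=` \bigcup_i A i -> meager B.
Proof.
move=> A_nd BA; exists (fun k => if unpickle k is Some i then A i else set0).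
split=> [k|x /BA [i _ Aix]]; last by exists (pickle i); rewrite ?pickleK.
by case: unpickle => [i|]; [exact: A_nd | rewrite /nowhere_dense closure0 interior0].
Qed.


Unset Implicit Arguments.

Theorem mainTheorem6 (m : nat) (hm : (2 <= m)%N) :
  meager (B' m) /\
  (forall T : Cantor m, closure (Gorbit T) = setT -> ~ B' m T).
Proof.
pose i0 : 'I_m := Ordinal (ltnW hm); pose i1 : 'I_m := Ordinal hm.
have B'_not_encodes T : B' m T -> exists N (G : bigraph N), ~ encodes i0 i1 T G.
  case=> n [le /bool_alg_order_determined]; exact: order_determined_not_encodes.
split.
  apply: (@meager_countable_cover _ {N : nat & bigraph N}
    (fun G => [set T | ~ encodes i0 i1 T (tagged G)])).
    by move=> [N G]; apply: nowhere_dense_not_encodes.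
  by move=> T /B'_not_encodes [N [G nG]]; exists (Tagged (fun N => bigraph N) G).
move=> T T_dense /B'_not_encodes [N [G]]; apply.
apply: (encodes_closure_orbit (Z := plant i0 i1 G T 0)); first by rewrite T_dense.
exact: plant_encodes.
Qed.
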